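(* Let $p$ be a prime and $G=Z_{p^{\lambda_1}}\times\cdots\times Z_{p^{\lambda_n}}$ with $\lambda_1\le\cdots\le\lambda_n$. For $\mathbf a\in\Lambda(G)$, the subgroup $R(\mathbf a)$ is a characteristic subgroup of $G$ if and only if $\mathbf a$ is canonical.
   Context: Tuples are ordered componentwise. $\Lambda(G)=\{\mathbf a\in\mathbb Z^n:\mathbf 0\le\mathbf a\le(\lambda_1,\dots,\lambda_n)\}$. For $\mathbf a\in\Lambda(G)$, $T(\mathbf a)$ is the set of $(g_1,\dots,g_n)\in G$ with $|g_i|=p^{a_i}$ for all $i$, and $R(\mathbf a)=\bigcup_{\mathbf b\le\mathbf a}T(\mathbf b)$ (a subgroup of $G$). A tuple $\mathbf a$ is canonical if (I) $a_i\ge a_{i-1}$ for all $i\in\{2,\dots,n\}$ and (II) $a_{i+1}-a_i\le\lambda_{i+1}-\lambda_i$ for all $i\in\{1,\dots,n-1\}$. *)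

From HB Require Import structures.
From mathcomp Require Import all_boot all_order all_algebra all_fingroup.
Set Implicit Arguments. Unset Strict Implicit. Unset Printing Implicit Defensive.

(* The cyclic group Z_{p^k}, represented as 'I_((p^k).-1.+1) with its
   additive (Zp) group structure.  For p prime, (p^k).-1.+1 = p^k. *)
Definition Zpk (p k : nat) : finType := 'I_((p ^ k).-1.+1).

Definition grp (p n : nat) (lam : 'I_n -> nat) : finType :=
  {dffun forall i : 'I_n, 'I_((p ^ lam i).-1.+1)}.

Definition gadd p n (lam : 'I_n -> nat) (g h : grp p lam) : grp p lam :=
  [ffun i => ((g i + h i)%R : 'I_((p ^ lam i).-1.+1))].
Definition gzero p n (lam : 'I_n -> nat) : grp p lam :=
  [ffun i => (0%R : 'I_((p ^ lam i).-1.+1))].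

Definition is_automorphism p n (lam : 'I_n -> nat) (f : grp p lam -> grp p lam) :=
  bijective f /\ forall g h, f (gadd g h) = gadd (f g) (f h).

Definition characteristic_subgroup p n (lam : 'I_n -> nat) (S : grp p lam -> Prop) :=
  [/\ S (gzero p lam),
      (forall g h, S g -> S h -> S (gadd g h)) &
      forall f, is_automorphism f ->
        forall x, S x <-> exists2 y, S y & f y = x].

Definition in_Lambda n (lam a : 'I_n -> nat) := forall i, a i <= lam i.

Definition T_set p n (lam : 'I_n -> nat) (a : 'I_n -> nat) (g : grp p lam) :=
  forall i, #[g i]%g = p ^ a i.

Definition R_set p n (lam : 'I_n -> nat) (a : 'I_n -> nat) (g : grp p lam) :=
  exists b : 'I_n -> nat, [/\ in_Lambda lam b, (forall i, b i <= a i) & T_set b g].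

Definition canonical_tuple n (lam a : 'I_n -> nat) :=
  (forall i j : 'I_n, j = i.+1 :> nat -> a i <= a j) /\
  (forall i j : 'I_n, j = i.+1 :> nat ->
     ((a j)%:Z - (a i)%:Z <= (lam j)%:Z - (lam i)%:Z)%R).

From mathcomp Require Import all_boot all_order all_algebra all_fingroup.
From mathcomp Require Import cyclic zify.
Import GRing.Theory.
Set Implicit Arguments. Unset Strict Implicit. Unset Printing Implicit Defensive.

(* R(a) consists of the g with p^(lam_i - a_i) | g_i for all i.  An endomorphism of G
   is determined by the images of the coordinate generators e_k, and the image of e_k
   is killed by p^(lam_k); hence R(a) is stable under every endomorphism as soon as
   lam_t - a_t <= (lam_s - a_s) + (lam_t - lam_s) for all s, t.  Conversely the
   transvection g_t += p^(lam_t - lam_s) g_s is an automorphism, and its value on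
   p^(lam_s - a_s) e_s lies in R(a) only if that inequality holds.  When lam is
   sorted, the inequality for all pairs says exactly that a and lam - a are
   nondecreasing, i.e. that a is canonical. *)

Lemma Zp_pexp_cast p l : 0 < p -> (p ^ l).-1.+1 = p ^ l.
Proof. by move=> p_gt0; rewrite prednK // expn_gt0 p_gt0. Qed.

Lemma dvdn_modn_pexp p l d x : d <= l -> (p ^ d %| x %% p ^ l) = (p ^ d %| x).
Proof. by move=> dl; rewrite /dvdn modn_dvdm // dvdn_exp2l. Qed.

Lemma order_Zp_pexp_dvdn p l k (x : 'I_((p ^ l).-1.+1)) : 0 < p -> k <= l ->
  (#[x]%g %| p ^ k) = (p ^ (l - k) %| x).
Proof.
move=> p_gt0 kl; rewrite order_dvdn Zp_expg -val_eqE /= -/(dvdn _ _).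
rewrite [X in X %| _]Zp_pexp_cast // -{1}(subnK kl) expnD dvdn_pmul2r //.
by rewrite expn_gt0 p_gt0.
Qed.

Lemma dvdn_pexp_mull_cancel p l k h : 0 < p -> p ^ l %| h * p ^ k -> p ^ (l - k) %| h.
Proof.
move=> p_gt0; case: (leqP l k) => [lk _ | kl]; first by rewrite (eqnP lk) dvd1n.
by rewrite -(@dvdn_pmul2r (p ^ k) _ h) ?expn_gt0 ?p_gt0 // -expnD (subnK (ltnW kl)).
Qed.

Lemma dvdn_pexp_shift p l k c d h : 0 < p -> p ^ l %| h * p ^ k ->
  d <= c + (l - k) -> p ^ d %| h * p ^ c.
Proof.
move=> p_gt0 /(dvdn_pexp_mull_cancel p_gt0) hl dc.
rewrite (dvdn_trans (dvdn_exp2l p dc)) // expnD [h * _]mulnC.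
by rewrite dvdn_pmul2l ?expn_gt0 ?p_gt0.
Qed.

Lemma modn_mul_modn d m u x : d %| u * m -> u * (x %% m) = u * x %[mod d].
Proof. by move=> dvd_um; rewrite muln_modr modn_dvdm. Qed.

Lemma inZp_mul_modn m M u x : m.+1 %| u * M ->
  inZp (u * (x %% M)) = inZp (u * x) :> 'I_m.+1.
Proof. by move=> dvd_uM; apply/val_inj/modn_mul_modn. Qed.

Lemma inZpD m x y : inZp (x + y) = (inZp x + inZp y)%R :> 'I_m.+1.
Proof. by apply/val_inj; rewrite /= modnDm. Qed.

Definition compatible n (lam a : 'I_n -> nat) :=
  forall s t : 'I_n, lam t - a t <= (lam s - a s) + (lam t - lam s).

Lemma ord_homo_leq n (F : 'I_n -> nat) :
  (forall i j : 'I_n, j = i.+1 :> nat -> F i <= F j) ->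
  forall i j : 'I_n, i <= j -> F i <= F j.
Proof.
move=> F_adj i [j jn]; elim: j jn => [|j IHj] jn /= ij.
  by have -> : i = Ordinal jn by apply/val_inj; move: ij; rewrite leqn0 => /eqP.
have [ij' | ji] := leqP i j; first exact: leq_trans (IHj (ltnW jn) ij') (F_adj _ _ _).
by have -> : i = Ordinal jn by apply/val_inj/eqP; rewrite eqn_leq ij ji.
Qed.

Lemma canonical_compatible n (lam a : 'I_n -> nat) :
  (forall i j : 'I_n, i <= j -> lam i <= lam j) -> in_Lambda lam a ->
  canonical_tuple lam a <-> compatible lam a.
Proof.
move=> lam_homo aLam; split=> [[a_adj d_adj] s t | a_comp].
  have a_homo := ord_homo_leq a_adj.
  have d_homo : forall i j : 'I_n, i <= j -> lam i - a i <= lam j - a j.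
    apply: ord_homo_leq => i j ji.
    by have := d_adj i j ji; have := aLam i; have := aLam j; lia.
  have := aLam s; have := aLam t; have [st | ts] := leqP s t.
    by have := a_homo _ _ st; have := lam_homo _ _ st; lia.
  by have := d_homo _ _ (ltnW ts); lia.
split=> i j ji; have ij : i <= j by rewrite ji.
all: by have := a_comp i j; have := a_comp j i; have := lam_homo _ _ ij;
  have := aLam i; have := aLam j; lia.
Qed.

Section Group.

Variables (p n : nat) (lam : 'I_n -> nat).
Hypothesis p_pr : prime p.
Let p_gt0 : 0 < p := prime_gt0 p_pr.
#[local] Hint Resolve p_gt0 : core.

Definition R_dvd (a : 'I_n -> nat) (g : grp p lam) :=
  forall i, p ^ (lam i - a i) %| g i.

Lemma R_setP a : in_Lambda lam a -> forall g, R_set a g <-> R_dvd a g.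
Proof.
move=> aLam g; split=> [[b [_ ba bT]] i | aR].
  by rewrite -order_Zp_pexp_dvdn // bT dvdn_exp2l.
have ord_g i : exists2 m, m <= a i & #[g i]%g = p ^ m.
  by apply/dvdn_pfactor; rewrite ?order_Zp_pexp_dvdn.
exists (fun i => logn p #[g i]%g); split=> i; case: (ord_g i) => m ma ->;
  rewrite pfactorK //; exact: leq_trans (aLam i).
Qed.

Lemma R_dvd0 a : R_dvd a (gzero p lam).
Proof. by move=> i; rewrite ffunE dvdn0. Qed.

Lemma R_dvdD a g h : R_dvd a g -> R_dvd a h -> R_dvd a (gadd g h).
Proof.
move=> ag ah i; rewrite ffunE /= [X in _ %% X]Zp_pexp_cast //.
by rewrite dvdn_modn_pexp ?leq_subr // dvdn_add.
Qed.

Definition gscale (m : nat) (g : grp p lam) : grp p lam := [ffun i => (g i *+ m)%R].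

Definition gsingle (k : 'I_n) (x : nat) : grp p lam :=
  [ffun i => if i == k then inZp x else 0%R].

Definition gadditive (f : grp p lam -> grp p lam) :=
  forall g h, f (gadd g h) = gadd (f g) (f h).

Lemma gscaleE m g i : val (gscale m g i) = g i * m %% p ^ lam i.
Proof. by rewrite ffunE Zp_mulrn /= [X in _ %% X]Zp_pexp_cast. Qed.

Lemma gsingle_scale k x : gsingle k x = gscale x (gsingle k 1).
Proof.
apply/ffunP => i; rewrite !ffunE; case: eqP => _; last by rewrite mul0rn.
by rewrite Zp_mulrn; apply/val_inj; rewrite /= modnMml mul1n.
Qed.

Lemma gsum_gsingle (g : grp p lam) :
  \big[@gadd p n lam/gzero p lam]_(k < n) gsingle k (g k) = g.
Proof.
apply/ffunP => i.
rewrite (big_morph (fun h : grp p lam => h i) (id1 := 0%R) (op1 := +%R)); last first.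
- by rewrite ffunE.
- by move=> h1 h2; rewrite ffunE.
rewrite (bigD1 i) //= big1 => [|k /negPf ki]; last by rewrite ffunE eq_sym ki.
by rewrite ffunE eqxx addr0 valZpK.
Qed.

Lemma gadditive0 f : gadditive f -> f (gzero p lam) = gzero p lam.
Proof.
move=> f_add; have := f_add (gzero p lam) (gzero p lam).
have -> : gadd (gzero p lam) (gzero p lam) = gzero p lam.
  by apply/ffunP => i; rewrite !ffunE addr0.
move/ffunP => f0_twice; apply/ffunP => i; have := f0_twice i; rewrite !ffunE.
by rewrite -{1}[f _ i]addr0 => /addrI <-.
Qed.

Lemma gadditive_scale f m g : gadditive f -> f (gscale m g) = gscale m (f g).
Proof.
move=> f_add; elim: m => [|m IHm].
  have -> : gscale 0 g = gzero p lam by apply/ffunP => i; rewrite !ffunE.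
  by rewrite gadditive0 //; apply/ffunP => i; rewrite !ffunE.
have scaleS h : gscale m.+1 h = gadd h (gscale m h).
  by apply/ffunP => i; rewrite !ffunE mulrS.
by rewrite !scaleS f_add IHm.
Qed.

Lemma gadditive_R_dvd_gsingle f a k x : compatible lam a -> gadditive f ->
  p ^ (lam k - a k) %| x -> R_dvd a (f (gsingle k x)).
Proof.
move=> a_comp f_add /dvdnP[t ->] j.
rewrite gsingle_scale gadditive_scale //; set h := f (gsingle k 1).
have h_ord : p ^ lam j %| h j * p ^ lam k.
  have : gscale (p ^ lam k) (gsingle k 1) = gzero p lam.
    apply/ffunP => i; apply/val_inj; rewrite gscaleE !ffunE /=.
    by case: eqP => [-> | _]; rewrite ?modnMl ?mul0n ?mod0n.
  move/(congr1 f); rewrite gadditive_scale // gadditive0 //.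
  move/ffunP/(_ j)/(congr1 val); rewrite gscaleE ffunE /= => hz.
  by rewrite /dvdn hz.
rewrite gscaleE dvdn_modn_pexp ?leq_subr // mulnCA dvdn_mull //.
exact: dvdn_pexp_shift p_gt0 h_ord (a_comp k j).
Qed.

Lemma gadditive_R_dvd f a g :
  compatible lam a -> gadditive f -> R_dvd a g -> R_dvd a (f g).
Proof.
move=> a_comp f_add ag; rewrite -(gsum_gsingle g).
rewrite (big_morph f f_add (gadditive0 f_add)).
apply: big_ind => [|h1 h2|k _]; [exact: R_dvd0 | exact: R_dvdD |].
exact: gadditive_R_dvd_gsingle.
Qed.

Definition transvection (s t : 'I_n) (u : nat) (g : grp p lam) : grp p lam :=
  [ffun k => if k == t then (g k + inZp (u * g s))%R else g k].

Lemma transvection_additive s t u : p ^ lam t %| u * p ^ lam s ->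
  gadditive (transvection s t u).
Proof.
move=> dvd_u g h; apply/ffunP => k; rewrite !ffunE; case: eqP => // ->.
rewrite [nat_of_ord _]/= inZp_mul_modn ?Zp_pexp_cast // mulnDr inZpD.
exact: addrACA.
Qed.

Lemma transvection_bij s t u : s != t -> bijective (transvection s t u).
Proof.
move=> st; pose untv (g : grp p lam) : grp p lam :=
  [ffun k => if k == t then (g k - inZp (u * g s))%R else g k].
exists untv => g; apply/ffunP => k; rewrite !ffunE; case: eqP => // ->.
- by rewrite (negPf st) addrK.
- by rewrite (negPf st) subrK.
Qed.

Lemma characteristic_compatible a : in_Lambda lam a ->
  characteristic_subgroup (R_set (p := p) (lam := lam) a) -> compatible lam a.
Proof.
move=> aLam [_ _ R_char] s t; have [-> | st] := eqVneq s t; first exact: leq_addr.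
set u := p ^ (lam t - lam s); set y := gsingle s (p ^ (lam s - a s)).
have dvd_u : p ^ lam t %| u * p ^ lam s by rewrite -expnD dvdn_exp2l //; lia.
have tv_aut : is_automorphism (transvection s t u).
  by split; [exact: transvection_bij | exact: transvection_additive].
have yR : R_dvd a y.
  move=> i; rewrite ffunE; case: eqP => [-> | _]; last exact: dvdn0.
  by rewrite /= [X in _ %% X]Zp_pexp_cast // dvdn_modn_pexp ?leq_subr.
have /(R_setP aLam)/(_ t) : R_set a (transvection s t u y).
  by apply/(R_char _ tv_aut); exists y => //; apply/(R_setP aLam).
rewrite ffunE eqxx /= !ffunE eq_sym (negPf st) eqxx add0n modn_mod /=.
rewrite !Zp_pexp_cast // modn_mul_modn // dvdn_modn_pexp ?leq_subr // -expnD.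
by rewrite dvdn_Pexp2l ?prime_gt1 // addnC.
Qed.

Lemma compatible_characteristic a : in_Lambda lam a -> compatible lam a ->
  characteristic_subgroup (R_set (p := p) (lam := lam) a).
Proof.
move=> aLam a_comp; have RP := R_setP aLam; split.
- exact/RP/R_dvd0.
- by move=> g h /RP ag /RP ah; apply/RP/R_dvdD.
move=> f [[f' fK f'K] f_add] x; split=> [xR | [y /RP yR <-]].
  have f'_add : gadditive f' by move=> g h; rewrite -{1}(f'K g) -{1}(f'K h) -f_add fK.
  by exists (f' x); [apply/RP/gadditive_R_dvd => //; apply/RP | rewrite f'K].
exact/RP/gadditive_R_dvd.
Qed.

End Group.

Unset Implicit Arguments.

Theorem mainTheorem3 (p n : nat) (lam : 'I_n -> nat) (a : 'I_n -> nat) :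
  prime p ->
  (forall i j : 'I_n, i <= j -> lam i <= lam j) ->
  in_Lambda lam a ->
  (characteristic_subgroup (R_set (p := p) (lam := lam) a) <-> canonical_tuple lam a).
Proof.
move=> p_pr lam_homo aLam; split=> [R_char | a_can].
  exact/(canonical_compatible lam_homo aLam)/(characteristic_compatible p_pr aLam R_char).
exact/(compatible_characteristic p_pr aLam)/(canonical_compatible lam_homo aLam).
Qed.
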